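(* Let $C$ be a split Cayley–Dickson algebra over its center $Z$. Then $C$ admits a derivation with invertible values if and only if one of the following holds: (I) $C$ contains an associative division subalgebra $B$ with $\dim_Z B=4$ such that $C$ is obtained from $B$ by the Cayley–Dickson process: there is $v\in C$ with $v^2=\gamma\in Z$, $\gamma\neq 0$, $C=B\oplus vB$, and $(a_1+vb_1)(a_2+vb_2)=(a_1a_2+\gamma b_2\overline{b_1})+v(\overline{a_1}b_2+a_2b_1)$ for $a_i,b_i\in B$; (II) $C=B\oplus xB$ where $B$ is a subfield of $C$ with $\dim_Z B=4$, $B=B^{\perp}$, and $x\in C$ satisfies $t(x)=0$ (in this case necessarily $\operatorname{char}Z=2$). More precisely: if $d$ is a derivation with invertible values of $C$, then $B:=\ker d$ is as in (I) or (II); in case (I), $d(a+vb)=v(bu)$ for all $a,b\in B$, for some fixed $u\in B$ with $t(u)=0$; in case (II), with $x=d^{-1}(1)$, $d(a+xb)=b$ for all $a,b\in B$. Conversely, in situation (I), for every nonzero $u\in B$ with $t(u)=0$ the map $a+vb\mapsto v(bu)$ ($a,b\in B$) is a derivation with invertible values of $C$; and in situation (II) the map $a+xb\mapsto b$ ($a,b\in B$) is a derivation with invertible values of $C$.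
   Context: A Cayley–Dickson algebra $C$ over a field $Z$ is an $8$-dimensional non-associative alternative unital algebra which is quadratic: every $x\in C$ satisfies $x^2-t(x)x+n(x)1=0$ where $t:C\to Z$ is linear (the trace) and $n$ is a strictly nondegenerate quadratic form (the norm) with $n(xy)=n(x)n(y)$. The involution is $\bar x=t(x)1-x$. The associated symmetric bilinear form is $f(x,y)=n(x+y)-n(x)-n(y)$, and for $M\subseteq C$, $M^{\perp}=\{y\in C: f(y,M)=0\}$. $C$ is split if it contains zero divisors; then $x$ is invertible iff $n(x)\neq 0$. A derivation with invertible values of $C$ is a nonzero derivation $d$ such that every value $d(y)$ is either invertible or zero. *)

From HB Require Import structures.
From mathcomp Require Import all_boot all_order all_algebra.
Set Implicit Arguments. Unset Strict Implicit. Unset Printing Implicit Defensive.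
Import GRing.Theory.
Local Open Scope ring_scope.

Definition polar (F : fieldType) (C : vectType F) (n : C -> F) (x y : C) : F :=
  n (x + y) - n x - n y.

Record is_CD_alg (F : fieldType) (C : vectType F) (mul : C -> C -> C) (one : C)
    (t : C -> F) (n : C -> F) : Prop := {
  cd_dim : \dim (fullv : {vspace C}) = 8%N;
  cd_mul_linl : forall a x y z, mul (a *: x + y) z = a *: mul x z + mul y z;
  cd_mul_linr : forall a x y z, mul z (a *: x + y) = a *: mul z x + mul z y;
  cd_mul1l : forall x, mul one x = x;
  cd_mul1r : forall x, mul x one = x;
  cd_altl : forall x y, mul (mul x x) y = mul x (mul x y);
  cd_altr : forall x y, mul (mul y x) x = mul y (mul x x);
  cd_nonassoc : exists x y z, mul (mul x y) z <> mul x (mul y z);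
  cd_t_lin : forall a x y, t (a *: x + y) = a * t x + t y;
  cd_nZ : forall a x, n (a *: x) = a ^+ 2 * n x;
  cd_polar_lin : forall a x y z,
      polar n (a *: x + y) z = a * polar n x z + polar n y z;
  cd_quad : forall x, mul x x - t x *: x + n x *: one = 0;
  cd_nM : forall x y, n (mul x y) = n x * n y;
  cd_nondeg : forall x, (forall y, polar n x y = 0) -> x = 0
}.

Definition cd_conj (F : fieldType) (C : vectType F) (one : C) (t : C -> F) (x : C) : C :=
  t x *: one - x.

Definition cd_split (F : fieldType) (C : vectType F) (mul : C -> C -> C) : Prop :=
  exists x y, x <> 0 /\ y <> 0 /\ mul x y = 0.

Definition cd_unit (F : fieldType) (C : vectType F) (mul : C -> C -> C) (one : C) (x : C) : Prop :=
  exists y, mul x y = one /\ mul y x = one.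

Definition is_derivation (F : fieldType) (C : vectType F) (mul : C -> C -> C) (d : C -> C) : Prop :=
  (forall a x y, d (a *: x + y) = a *: d x + d y) /\
  (forall x y, d (mul x y) = mul (d x) y + mul x (d y)).

Definition der_inv_values (F : fieldType) (C : vectType F) (mul : C -> C -> C) (one : C)
    (d : C -> C) : Prop :=
  [/\ is_derivation mul d, exists y, d y <> 0 &
      forall y, d y = 0 \/ cd_unit mul one (d y)].

Definition is_subalg (F : fieldType) (C : vectType F) (mul : C -> C -> C) (one : C)
    (B : {vspace C}) : Prop :=
  one \in B /\ (forall x y, x \in B -> y \in B -> mul x y \in B).

Definition assoc_on (F : fieldType) (C : vectType F) (mul : C -> C -> C) (B : {vspace C}) : Prop :=
  forall x y z, x \in B -> y \in B -> z \in B -> mul (mul x y) z = mul x (mul y z).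

Definition comm_on (F : fieldType) (C : vectType F) (mul : C -> C -> C) (B : {vspace C}) : Prop :=
  forall x y, x \in B -> y \in B -> mul x y = mul y x.

Definition division_on (F : fieldType) (C : vectType F) (mul : C -> C -> C) (one : C)
    (B : {vspace C}) : Prop :=
  forall x, x \in B -> x <> 0 -> exists y, y \in B /\ mul x y = one /\ mul y x = one.

Definition dirsum (F : fieldType) (C : vectType F) (mul : C -> C -> C) (B : {vspace C}) (w : C) : Prop :=
  (forall c, exists a b, a \in B /\ b \in B /\ c = a + mul w b) /\
  (forall a b, a \in B -> b \in B -> a + mul w b = 0 -> a = 0 /\ b = 0).

Definition situationI (F : fieldType) (C : vectType F) (mul : C -> C -> C) (one : C)
    (t : C -> F) (B : {vspace C}) (v : C) (gamma : F) : Prop :=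
  is_subalg mul one B /\ assoc_on mul B /\ division_on mul one B /\
  \dim B = 4%N /\ gamma != 0 /\ mul v v = gamma *: one /\
  dirsum mul B v /\
      (forall a1 b1 a2 b2, a1 \in B -> b1 \in B -> a2 \in B -> b2 \in B ->
        mul (a1 + mul v b1) (a2 + mul v b2) =
          (mul a1 a2 + gamma *: mul b2 (cd_conj one t b1))
          + mul v (mul (cd_conj one t a1) b2 + mul a2 b1)).

Definition situationII (F : fieldType) (C : vectType F) (mul : C -> C -> C) (one : C)
    (t : C -> F) (n : C -> F) (B : {vspace C}) (x : C) : Prop :=
  is_subalg mul one B /\ assoc_on mul B /\ comm_on mul B /\ division_on mul one B /\
  \dim B = 4%N /\
  (forall y, y \in B <-> (forall b, b \in B -> polar n y b = 0)) /\
  t x = 0 /\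
  dirsum mul B x.

From HB Require Import structures.
From mathcomp Require Import all_boot all_order all_algebra.
From mathcomp Require Import ring zify.
From Stdlib Require Import ClassicalEpsilon.
Set Implicit Arguments. Unset Strict Implicit. Unset Printing Implicit Defensive.
Import GRing.Theory.
Local Open Scope ring_scope.

(* Let d be a derivation with invertible values and
   B = ker d.  Values of d and nonzero elements of B are anisotropic, and
   C contains an isotropic vector z; since right multiplication by z sends
   an anisotropic subspace U injectively onto a subspace meeting U in 0,
   anisotropic subspaces have dimension <= 4.  Rank-nullity then forces
   dim B = dim (im d) = 4.  If 1 = d(x) lies in the image of d we are in
   situation (II): then char F = 2 and B is a commutative, hence (Kleinfeld)
   associative, field with B = B^perp.  Otherwise B /\ im d = 0, and for
   v = d(y0) <> 0 the Cayley--Dickson multiplication table of B (+) vB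
   follows from the cancellation identities, so we are in situation (I).

   In either situation the map a + v b |-> v (b u), resp.
   a + x b |-> b, is checked to be a derivation by expanding products with
   the multiplication table; its values are invertible because B is a
   division algebra. *)

(* Coordinates in a fixed basis: two vectors are equal iff all their
   coordinates are, which turns identities in C into identities in F that
   [ring] can decide (tactic [vring]). *)
Definition cf (F : fieldType) (C : vectType F) i (x : C) : F := coord (vbasis fullv) i x.
Lemma cfD (F : fieldType) (C : vectType F) i (x y : C) : cf i (x + y) = cf i x + cf i y.
Proof. by rewrite /cf linearD. Qed.
Lemma cfN (F : fieldType) (C : vectType F) i (x : C) : cf i (- x) = - cf i x.
Proof. by rewrite /cf linearN. Qed.
Lemma cfB (F : fieldType) (C : vectType F) i (x y : C) : cf i (x - y) = cf i x - cf i y.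
Proof. by rewrite /cf linearB. Qed.
Lemma cfZ (F : fieldType) (C : vectType F) i a (x : C) : cf i (a *: x) = a * cf i x.
Proof. by rewrite /cf linearZ. Qed.
Lemma cf0 (F : fieldType) (C : vectType F) i : cf i (0 : C) = 0.
Proof. by rewrite /cf linear0. Qed.
Lemma coord_ext (F : fieldType) (C : vectType F) (u v : C) :
  (forall i, cf i u = cf i v) -> u = v.
Proof.
move=> h; rewrite (coord_vbasis (memvf u)) (coord_vbasis (memvf v)).
by apply: eq_bigr => i _; have := h i; rewrite /cf => ->.
Qed.
Ltac vring := apply: coord_ext => ?; rewrite ?(cfD, cfN, cfB, cfZ, cf0); ring.

(* To derive u = v from known equations a = b (and a' = b'), it suffices to
   exhibit u - v as a linear combination of the differences a - b, a' - b';
   the coefficients are supplied by hand and the rest is left to [vring]. *)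
Lemma veq_comb1 (F : fieldType) (C : vectType F) (a b u v : C) (c : F) :
  a = b -> u - v = c *: (a - b) -> u = v.
Proof. by move=> -> /eqP; rewrite subrr scaler0 subr_eq0 => /eqP. Qed.
Lemma veq_comb2 (F : fieldType) (C : vectType F) (a b a' b' u v : C) (c c' : F) :
  a = b -> a' = b' -> u - v = c *: (a - b) + c' *: (a' - b') -> u = v.
Proof. by move=> -> -> /eqP; rewrite !subrr !scaler0 addr0 subr_eq0 => /eqP. Qed.
Lemma seq_comb1 (R : comNzRingType) (a b u v c : R) :
  a = b -> u - v = c * (a - b) -> u = v.
Proof. by move=> -> /eqP; rewrite subrr mulr0 subr_eq0 => /eqP. Qed.

Section LinearMap.
Variables (F : fieldType) (C : vectType F) (g : C -> C).
Hypothesis g_lin : forall a x y, g (a *: x + y) = a *: g x + g y.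
Definition lin_wrap (x : C) := g x.
Lemma lin_wrap_linear : linear lin_wrap. Proof. by move=> a x y; rewrite /lin_wrap g_lin. Qed.
HB.instance Definition _ := GRing.isLinear.Build F C C *:%R lin_wrap lin_wrap_linear.
Definition Lf : 'End(C) := linfun lin_wrap.
Lemma LfE x : Lf x = g x. Proof. by rewrite /Lf lfunE. Qed.
End LinearMap.

Section CayleyDickson.
Variables (F : fieldType) (C : vectType F) (mul : C -> C -> C) (one : C) (t n : C -> F).
Hypothesis CD : is_CD_alg mul one t n.
Local Notation "x ** y" := (mul x y) (at level 40, left associativity).
Local Notation f := (polar n).
Local Notation cj := (cd_conj one t).

Lemma cmDl x y z : (x + y) ** z = x ** z + y ** z.
Proof. by have := cd_mul_linl CD 1 x y z; rewrite !scale1r. Qed.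
Lemma cmDr x y z : z ** (x + y) = z ** x + z ** y.
Proof. by have := cd_mul_linr CD 1 x y z; rewrite !scale1r. Qed.
Lemma cm0l z : 0 ** z = 0.
Proof. by apply: (addrI (0 ** z)); rewrite addr0 -cmDl addr0. Qed.
Lemma cm0r z : z ** 0 = 0.
Proof. by apply: (addrI (z ** 0)); rewrite addr0 -cmDr addr0. Qed.
Lemma cmZl a x z : (a *: x) ** z = a *: (x ** z).
Proof. by have := cd_mul_linl CD a x 0 z; rewrite cm0l !addr0. Qed.
Lemma cmZr a x z : z ** (a *: x) = a *: (z ** x).
Proof. by have := cd_mul_linr CD a x 0 z; rewrite cm0r !addr0. Qed.
Lemma cmNl x z : (- x) ** z = - (x ** z).
Proof. by rewrite -scaleN1r cmZl scaleN1r. Qed.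
Lemma cmNr x z : z ** (- x) = - (z ** x).
Proof. by rewrite -scaleN1r cmZr scaleN1r. Qed.
Lemma cmBl x y z : (x - y) ** z = x ** z - y ** z.
Proof. by rewrite cmDl cmNl. Qed.
Lemma cmBr x y z : z ** (x - y) = z ** x - z ** y.
Proof. by rewrite cmDr cmNr. Qed.
Lemma cm1l x : one ** x = x. Proof. exact: (cd_mul1l CD). Qed.
Lemma cm1r x : x ** one = x. Proof. exact: (cd_mul1r CD). Qed.

Ltac mnorm := rewrite ?(cmDl, cmDr, cmBl, cmBr, cmNl, cmNr, cmZl, cmZr, cm0l, cm0r, cm1l, cm1r).

Lemma tD x y : t (x + y) = t x + t y.
Proof. by have := cd_t_lin CD 1 x y; rewrite scale1r GRing.mul1r. Qed.
Lemma t0 : t 0 = 0.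
Proof. by apply: (addrI (t 0)); rewrite addr0 -tD addr0. Qed.
Lemma tZ a x : t (a *: x) = a * t x.
Proof. by have := cd_t_lin CD a x 0; rewrite t0 !addr0. Qed.
Lemma tN x : t (- x) = - t x.
Proof. by rewrite -scaleN1r tZ mulN1r. Qed.
Lemma tB x y : t (x - y) = t x - t y.
Proof. by rewrite tD tN. Qed.

Lemma polarC x y : f x y = f y x.
Proof. by rewrite /polar (addrC x); ring. Qed.
Lemma polarDl x y z : f (x + y) z = f x z + f y z.
Proof. by have := cd_polar_lin CD 1 x y z; rewrite scale1r GRing.mul1r. Qed.
Lemma polar0l z : f 0 z = 0.
Proof. by apply: (addrI (f 0 z)); rewrite addr0 -polarDl addr0. Qed.
Lemma polarZl a x z : f (a *: x) z = a * f x z.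
Proof. by have := cd_polar_lin CD a x 0 z; rewrite polar0l !addr0. Qed.
Lemma polarNl x z : f (- x) z = - f x z.
Proof. by rewrite -scaleN1r polarZl mulN1r. Qed.
Lemma polarBl x y z : f (x - y) z = f x z - f y z.
Proof. by rewrite polarDl polarNl. Qed.
Lemma polarDr x y z : f z (x + y) = f z x + f z y.
Proof. by rewrite polarC polarDl !(polarC z). Qed.
Lemma polarZr a x z : f z (a *: x) = a * f z x.
Proof. by rewrite polarC polarZl polarC. Qed.
Lemma polarNr x z : f z (- x) = - f z x.
Proof. by rewrite polarC polarNl polarC. Qed.
Lemma polarBr x y z : f z (x - y) = f z x - f z y.
Proof. by rewrite polarDr polarNr. Qed.
Lemma polar0r z : f z 0 = 0.
Proof. by rewrite polarC polar0l. Qed.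
Lemma nD x y : n (x + y) = n x + n y + f x y.
Proof. by rewrite /polar; ring. Qed.

Lemma C_nontrivial : ~ (forall x : C, x = 0).
Proof.
move=> H; have := cd_dim CD.
have -> : (fullv : {vspace C}) = 0%VS.
  by apply/eqP; rewrite -subv0; apply/subvP => x _; rewrite (H x) mem0v.
by rewrite dimv0.
Qed.

Lemma one_neq0 : one != 0.
Proof.
apply/eqP => h; apply: C_nontrivial => x.
by rewrite -(cm1r x) h cm0r.
Qed.

(* n(1) = 1: otherwise n would vanish identically, contradicting
   nondegeneracy. *)
Lemma n1 : n one = 1.
Proof.
have h : n one = n one * n one by rewrite -(cd_nM CD) cm1l.
have [h0|h0] := eqVneq (n one) 0; last first.
  by apply: (mulfI h0); rewrite mulr1 -h.
exfalso; apply: C_nontrivial => x; apply: (cd_nondeg CD) => y.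
have nz : forall z, n z = 0 by move=> z; rewrite -(cm1r z) (cd_nM CD) h0 mulr0.
by rewrite /polar !nz subrr subr0.
Qed.

Lemma scaler1_inj a b : a *: one = b *: one -> a = b.
Proof.
move=> /eqP; rewrite -subr_eq0 -scalerBl scaler_eq0 (negbTE one_neq0) orbF.
by rewrite subr_eq0 => /eqP.
Qed.

Lemma quad x : x ** x = t x *: x - n x *: one.
Proof.
have h := cd_quad CD x.
by apply: (veq_comb1 (c:=1) h); vring.
Qed.

Lemma quad_polar x y : x ** y + y ** x = t x *: y + t y *: x - f x y *: one.
Proof.
have := quad (x + y); rewrite !cmDl !cmDr !quad tD nD => h.
by apply: (veq_comb1 (c:=1) h); vring.
Qed.

Lemma t1 : t one = 2%:R.
Proof.
have h := quad one; rewrite cm1l n1 in h.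
by apply: scaler1_inj; apply: (veq_comb1 (c:= -1) h); vring.
Qed.

Lemma t_polar1 x : t x = f x one.
Proof.
have h := quad_polar x one; rewrite cm1l cm1r t1 in h.
by apply: scaler1_inj; apply: (veq_comb1 (c:= -1) h); vring.
Qed.

Lemma cjE x : cj x = t x *: one - x. Proof. by []. Qed.
Lemma tcj x : t (cj x) = t x.
Proof. by rewrite cjE tB tZ t1; ring. Qed.
Lemma cjK x : cj (cj x) = x.
Proof. by rewrite cjE tcj cjE; vring. Qed.
Lemma cjD x y : cj (x + y) = cj x + cj y.
Proof. by rewrite !cjE tD; vring. Qed.
Lemma cjN x : cj (- x) = - cj x.
Proof. by rewrite !cjE tN; vring. Qed.
Lemma cj0 : cj 0 = 0. Proof. by rewrite cjE t0 scale0r subr0. Qed.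

Lemma mulcj x : x ** cj x = n x *: one.
Proof. by rewrite cjE; mnorm; rewrite quad; vring. Qed.
Lemma cjmul x : cj x ** x = n x *: one.
Proof. by rewrite cjE; mnorm; rewrite quad; vring. Qed.

Lemma cj_cancelL x y : cj x ** (x ** y) = n x *: y.
Proof. by rewrite cjE; mnorm; rewrite -(cd_altl CD) quad; mnorm; vring. Qed.
Lemma cj_cancelR x y : (y ** x) ** cj x = n x *: y.
Proof. by rewrite cjE; mnorm; rewrite (cd_altr CD) quad; mnorm; vring. Qed.

Lemma cj_cancelL2 x y z : cj x ** (y ** z) + cj y ** (x ** z) = f x y *: z.
Proof.
have h := cj_cancelL (x + y) z; rewrite cjD nD in h.
rewrite ?(cmDl, cmDr, cmBl, cmBr, cmNl, cmNr, cmZl, cmZr, cm1l, cm1r) in h.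
rewrite -!(cd_altl CD) !quad in h.
rewrite ?(cmDl, cmDr, cmBl, cmBr, cmNl, cmNr, cmZl, cmZr, cm1l, cm1r) in h.
rewrite !cjE; mnorm.
by apply: (veq_comb1 (c:=1) h); vring.
Qed.

Lemma polar_mulL x y z : f (x ** y) (x ** z) = n x * f y z.
Proof.
have h := cd_nM CD x (y + z); rewrite cmDr !nD !(cd_nM CD) in h.
by apply: (seq_comb1 (c:=1) h); ring.
Qed.

Lemma polar_mul_swap x w y z : f (x ** y) (w ** z) + f (w ** y) (x ** z) = f x w * f y z.
Proof.
have h := polar_mulL (x + w) y z; rewrite !cmDl !polarDl !polarDr nD !polar_mulL in h.
by apply: (seq_comb1 (c:=1) h); ring.
Qed.

Lemma polar_adj x y z : f (x ** y) z = f y (cj x ** z).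
Proof.
have h := polar_mul_swap x one y z; rewrite !cm1l -t_polar1 in h.
rewrite cjE cmBl cmZl cm1l polarBr polarZr.
by apply: (seq_comb1 (c:=1) h); ring.
Qed.

Lemma tM x y : t (x ** y) = t x * t y - f x y.
Proof.
by rewrite t_polar1 polar_adj cm1r cjE polarBr polarZr -t_polar1 (polarC y) polarC (polarC y); ring.
Qed.

Lemma cjM x y : cj (x ** y) = cj y ** cj x.
Proof.
have h := quad_polar x y.
rewrite !cjE tM; mnorm.
by apply: (veq_comb1 (c:= -1) h); vring.
Qed.

Lemma unit_n x : cd_unit mul one x -> n x != 0.
Proof.
case=> y [h _]; apply/eqP => h0.
by have := cd_nM CD x y; rewrite h n1 h0 GRing.mul0r; apply/eqP; rewrite oner_eq0.
Qed.

Lemma n_unit x : n x != 0 -> cd_unit mul one x.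
Proof.
move=> h; exists ((n x)^-1 *: cj x); rewrite cmZr cmZl mulcj cjmul.
by rewrite scalerA mulVf // scale1r.
Qed.

Lemma cancelL x y : n x != 0 -> x ** y = 0 -> y = 0.
Proof.
move=> h e; have := cj_cancelL x y; rewrite e cm0r => /esym /eqP.
by rewrite scaler_eq0 (negbTE h) => /eqP.
Qed.
Lemma cancelR x y : n x != 0 -> y ** x = 0 -> y = 0.
Proof.
move=> h e; have := cj_cancelR x y; rewrite e cm0l => /esym /eqP.
by rewrite scaler_eq0 (negbTE h) => /eqP.
Qed.

Lemma assoc_swap12 x y z : (x ** y) ** z - x ** (y ** z) = - ((y ** x) ** z - y ** (x ** z)).
Proof.
have h := cd_altl CD (x + y) z; rewrite ?(cmDl, cmDr) !(cd_altl CD) in h.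
by apply: (veq_comb1 (c:=1) h); vring.
Qed.
Lemma assoc_swap23 x y z : (x ** y) ** z - x ** (y ** z) = - ((x ** z) ** y - x ** (z ** y)).
Proof.
have h := cd_altr CD (y + z) x; rewrite ?(cmDl, cmDr) !(cd_altr CD) in h.
by apply: (veq_comb1 (c:= 1) h); vring.
Qed.

(* Kleinfeld's identity  [xy,z] - x[y,z] - [x,z]y = 3 (x,y,z): on a
   commutative subalgebra, 3 (x,y,z) = 0. *)
Lemma kleinfeld x y z :
  ((x ** y) ** z - z ** (x ** y)) - x ** (y ** z - z ** y) - (x ** z - z ** x) ** y
  = 3%:R *: ((x ** y) ** z - x ** (y ** z)).
Proof.
have h1 := assoc_swap23 x z y.
have h2 := assoc_swap12 z x y.
mnorm.
by apply: (veq_comb2 (c:= -2%:R) (c':=1) h1 h2); vring.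
Qed.

Definition Rm z : 'End(C) := @Lf F C (fun c => c ** z).
Lemma RmE z c : Rm z c = c ** z.
Proof. exact: (LfE (fun a x y => cd_mul_linl CD a x y z)). Qed.
Definition Lm z : 'End(C) := @Lf F C (fun c => z ** c).
Lemma LmE z c : Lm z c = z ** c.
Proof. exact: (LfE (fun a x y => cd_mul_linr CD a x y z)). Qed.

(* In presence of an isotropic vector z <> 0, an anisotropic subspace U has
   dimension at most 4: U z has the dimension of U and meets U only in 0. *)
Lemma anisotropic_dim (U : {vspace C}) z : z != 0 -> n z = 0 ->
  (forall u, u \in U -> u != 0 -> n u != 0) -> (\dim U <= 4)%N.
Proof.
move=> z0 nz0 hU.
have ker0 : (U :&: lker (Rm z) = 0)%VS.
  apply/eqP; rewrite -subv0; apply/subvP => u /memv_capP [uU].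
  rewrite memv_ker RmE !memv0 => /eqP e.
  apply/negPn/negP => u0; have nu := hU u uU u0.
  by move: z0; rewrite (cancelL nu e) eqxx.
have disj : (U :&: (Rm z @: U) = 0)%VS.
  apply/eqP; rewrite -subv0; apply/subvP => w /memv_capP [wU /memv_imgP [u uU ew]].
  rewrite memv0; apply/negPn/negP => h.
  have := hU _ wU h; rewrite ew RmE (cd_nM CD) nz0 mulr0 eqxx //.
have := dimv_disjoint_sum disj; rewrite limg_dim_eq // => hs.
have := dimvS (subvf (U + Rm z @: U)); rewrite hs (cd_dim CD).
lia.
Qed.

Lemma cj_mem (B : {vspace C}) k : one \in B -> k \in B -> cj k \in B.
Proof. by move=> h1 hk; rewrite cjE memvB // memvZ. Qed.

Lemma div_of_aniso (B : {vspace C}) : one \in B ->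
  (forall k, k \in B -> k != 0 -> n k != 0) -> division_on mul one B.
Proof.
move=> h1 hB k kB k0; have nk : n k != 0 by apply: hB kB _; apply/eqP.
exists ((n k)^-1 *: cj k); split; first by rewrite memvZ // cj_mem.
by rewrite cmZr cmZl mulcj cjmul scalerA mulVf // scale1r.
Qed.

Lemma div_n_neq0 (B : {vspace C}) b : division_on mul one B -> b \in B -> b != 0 -> n b != 0.
Proof.
move=> dv bB b0; case: (dv b bB (elimN eqP b0)) => y [_ [e e']].
by apply: unit_n; exists y.
Qed.

Section Derivation.
Variable d : C -> C.
Hypothesis Dd : is_derivation mul d.

Lemma dlin a x y : d (a *: x + y) = a *: d x + d y. Proof. exact: Dd.1. Qed.
Lemma dM x y : d (x ** y) = d x ** y + x ** d y. Proof. exact: Dd.2. Qed.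
Lemma dD x y : d (x + y) = d x + d y.
Proof. by have := dlin 1 x y; rewrite !scale1r. Qed.
Lemma d0 : d 0 = 0.
Proof. by apply: (addrI (d 0)); rewrite addr0 -dD addr0. Qed.
Lemma dZ a x : d (a *: x) = a *: d x.
Proof. by have := dlin a x 0; rewrite d0 !addr0. Qed.
Lemma dN x : d (- x) = - d x.
Proof. by rewrite -scaleN1r dZ scaleN1r. Qed.
Lemma dB x y : d (x - y) = d x - d y.
Proof. by rewrite dD dN. Qed.
Lemma d1 : d one = 0.
Proof.
have h := dM one one; rewrite cm1l cm1r cm1l in h.
by apply: (veq_comb1 (c:= -1) h); vring.
Qed.
Lemma dZ1 a : d (a *: one) = 0.
Proof. by rewrite dZ d1 scaler0. Qed.

(* Differentiating x^2 = t(x) x - n(x) 1 and comparing with the linearized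
   quadratic equation gives t(d x) x = f(x, d x) 1; as d kills scalars this
   forces t(d x) = 0 and f(x, d x) = 0. *)
Lemma d_trace_polar x : t (d x) = 0 /\ f x (d x) = 0.
Proof.
have h1 := dM x x; rewrite quad dB dZ dZ1 subr0 in h1.
have h2 := quad_polar x (d x).
have h3 : t (d x) *: x = f x (d x) *: one.
  by apply: (veq_comb2 (c:= -1) (c':= -1) h1 h2); vring.
have [e|e] := eqVneq (t (d x)) 0.
  by split=> //; apply: scaler1_inj; rewrite -h3 e !scale0r.
have hx : x = ((t (d x))^-1 * f x (d x)) *: one.
  by rewrite -scalerA -h3 scalerA mulVf ?scale1r.
by move: e; rewrite {1}hx dZ1 t0 eqxx.
Qed.

Lemma skew x y : f (d x) y = - f x (d y).
Proof.
have := (d_trace_polar (x + y)).2.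
rewrite dD polarDl !polarDr (d_trace_polar x).2 (d_trace_polar y).2.
by rewrite add0r addr0 (polarC y) => h; apply: (seq_comb1 (c:=1) h); ring.
Qed.
End Derivation.

Lemma isotropic_vector : cd_split mul -> exists z, z != 0 /\ n z = 0.
Proof.
case=> x [y [x0 [y0 e]]]; exists x; split; first exact/eqP.
by apply/eqP/negPn/negP => h; apply: y0; exact: cancelL h e.
Qed.

Section KernelOfDerivation.
Variable d : C -> C.
Hypothesis Dv : der_inv_values mul one d.
Hypothesis SPL : cd_split mul.
Variable B : {vspace C}.
Hypothesis HB : forall y, y \in B <-> d y = 0.

Let Dd : is_derivation mul d. Proof. by case: Dv. Qed.
Definition Dl : 'End(C) := @Lf F C d.
Lemma DlE y : Dl y = d y. Proof. exact: (LfE Dd.1). Qed.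
Definition Im := limg Dl.
Lemma memIm y : y \in Im <-> exists z, y = d z.
Proof.
split; first by case/memv_imgP => z _ ->; exists z; rewrite DlE.
by case=> z ->; rewrite -DlE memv_img ?memvf.
Qed.
Lemma d_im z : d z \in Im. Proof. by apply/memIm; exists z. Qed.

Lemma B_lker : B = lker Dl.
Proof.
apply/vspaceP => y; rewrite memv_ker DlE; apply/idP/eqP; first by move/HB.
by move/HB.
Qed.

Lemma rank_nullity : (\dim B + \dim Im = 8)%N.
Proof.
have := limg_ker_dim Dl fullv; rewrite capfv -B_lker (cd_dim CD) => <- //.
Qed.

Lemma ker_d0 k : k \in B -> d k = 0. Proof. by move/HB. Qed.
Lemma d0_ker k : d k = 0 -> k \in B. Proof. by move/HB. Qed.

Lemma one_B : one \in B. Proof. exact/d0_ker/(d1 Dd). Qed.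
Lemma mulB a b : a \in B -> b \in B -> a ** b \in B.
Proof. by move=> /ker_d0 ha /ker_d0 hb; apply: d0_ker; rewrite (dM Dd) ha hb cm0l cm0r addr0. Qed.
Lemma dML k y : k \in B -> d (k ** y) = k ** d y.
Proof. by move=> /ker_d0 h; rewrite (dM Dd) h cm0l add0r. Qed.
Lemma dMR k y : k \in B -> d (y ** k) = d y ** k.
Proof. by move=> /ker_d0 h; rewrite (dM Dd) h cm0r addr0. Qed.
Lemma cjB b : b \in B -> cj b \in B. Proof. by move=> bB; rewrite cj_mem // one_B. Qed.

Lemma im_anisotropic i : i \in Im -> i != 0 -> n i != 0.
Proof.
case/memIm => z -> h; case: Dv => _ _ /(_ z) [e|u]; first by rewrite e eqxx in h.
exact: unit_n.
Qed.

Lemma d_nonzero : exists y0, d y0 != 0.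
Proof. by case: Dv => _ [y hy] _; exists y; apply/eqP. Qed.

(* If k in B were isotropic, d(k y0) = k d(y0) would be a nonzero
   (cancellation by the anisotropic d(y0)) but isotropic value of d. *)
Lemma ker_anisotropic k : k \in B -> k != 0 -> n k != 0.
Proof.
move=> kB k0; case: d_nonzero => y0 hy0.
have nw := im_anisotropic (d_im y0) hy0.
apply/negP => /eqP nk.
have e := dML y0 kB.
case: Dv => _ _ /(_ (k ** y0)) [e0|u].
  by move: k0; rewrite (cancelR nw (etrans (esym e) e0)) eqxx.
by move: (unit_n u); rewrite e (cd_nM CD) nk GRing.mul0r eqxx.
Qed.

(* Both B and Im are anisotropic, so dim <= 4 each, and they add up to 8. *)
Lemma dimB : \dim B = 4%N.
Proof.
case: (isotropic_vector SPL) => z [z0 nz].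
have h1 := anisotropic_dim z0 nz ker_anisotropic.
have h2 := anisotropic_dim z0 nz (@im_anisotropic).
have := rank_nullity; lia.
Qed.
Lemma dimIm : \dim Im = 4%N.
Proof. by have := rank_nullity; rewrite dimB; lia. Qed.

Lemma divB : division_on mul one B.
Proof. exact: div_of_aniso one_B ker_anisotropic. Qed.

Section OneInImage.
Variable x : C.
Hypothesis hx : d x = one.

(* Differentiating x^2 gives 2 x = t(x) 1; as x is not a scalar, 2 = 0. *)
Lemma char2_of_dx1 : (2%:R : F) = 0.
Proof.
have h := dM Dd x x; rewrite quad (dB Dd) !(dZ Dd) (d1 Dd) scaler0 subr0 hx cm1l cm1r in h.
have [//|h2] := eqVneq (2%:R : F) 0.
have h3 : 2%:R *: x = t x *: one by rewrite h scaler_nat mulr2n.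
have hxx : x = (2%:R^-1 * t x) *: one by rewrite -scalerA -h3 scalerA mulVf // scale1r.
by move: hx; rewrite {1}hxx (dZ1 Dd) => /esym/eqP; rewrite (negbTE one_neq0).
Qed.

Lemma addvv (w : C) : w + w = 0.
Proof. by rewrite -mulr2n -scaler_nat char2_of_dx1 scale0r. Qed.

Lemma tx0 : t x = 0.
Proof.
have h := dM Dd x x.
rewrite quad (dB Dd) !(dZ Dd) (d1 Dd) scaler0 subr0 hx cm1l cm1r addvv in h.
by apply: scaler1_inj; rewrite h scale0r.
Qed.

Lemma d_xB k : k \in B -> d (x ** k) = k.
Proof. by move=> kB; rewrite (dMR _ kB) hx cm1l. Qed.

(* Differentiating the linearized quadratic equation for (x, k) and for
   (x a, b) shows that B is traceless and anticommutative, hence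
   commutative in characteristic 2, and totally isotropic. *)
Lemma traceB0 k : k \in B -> t k = 0.
Proof.
move=> kB; have := congr1 d (quad_polar x k).
rewrite (dB Dd) !(dD Dd) !(dZ Dd) (d1 Dd) (d_xB kB) (dML _ kB) hx (ker_d0 kB) cm1r => h.
apply: scaler1_inj; apply: (veq_comb2 (c:=-1) (c':=1) h (addvv k)); vring.
Qed.

Lemma anticommB a b : a \in B -> b \in B -> a ** b + b ** a = 0.
Proof.
move=> aB bB; have := congr1 d (quad_polar (x ** a) b).
rewrite (dB Dd) !(dD Dd) !(dZ Dd) (d1 Dd) (dMR _ bB) (dML _ bB) (d_xB aB) (ker_d0 bB).
rewrite (traceB0 bB) => h; apply: (veq_comb1 (c:=1) h); vring.
Qed.

Lemma commB a b : a \in B -> b \in B -> a ** b = b ** a.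
Proof.
move=> aB bB; have h1 := anticommB aB bB; have h2 := addvv (b ** a).
by apply: (veq_comb2 (c:=1) (c':= -1) h1 h2); vring.
Qed.

Lemma polarB0 a b : a \in B -> b \in B -> f a b = 0.
Proof.
move=> aB bB; have h := quad_polar a b.
rewrite anticommB // (traceB0 aB) (traceB0 bB) !scale0r in h.
by apply: scaler1_inj; apply: (veq_comb1 (c:=1) h); vring.
Qed.

(* Kleinfeld's identity on the commutative subalgebra B, with 3 = 1. *)
Lemma assocB : assoc_on mul B.
Proof.
move=> a b c aB bB cB.
have k := kleinfeld a b c.
have e1 : (a ** b) ** c - c ** (a ** b) = 0 by rewrite (commB (mulB aB bB) cB) subrr.
have e2 : b ** c - c ** b = 0 by rewrite (commB bB cB) subrr.
have e4 : a ** c - c ** a = 0 by rewrite (commB aB cB) subrr.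
rewrite e1 e2 e4 cm0r cm0l !subr0 in k.
have e3 : (3%:R : F) = 1 by rewrite -[3%N]/(1 + 2)%N natrD char2_of_dx1 addr0.
rewrite e3 scale1r in k.
by apply/eqP; rewrite -subr_eq0 k.
Qed.

(* d(x k) = k shows B <= Im, with equality by dimension. *)
Lemma Im_B : Im = B.
Proof.
have sB : (B <= Im)%VS.
  by apply/subvP => k kB; apply/memIm; exists (x ** k); rewrite d_xB.
apply/esym/eqP; rewrite eqEdim sB dimB dimIm //.
Qed.

(* c = (c - x d(c)) + x d(c) is the decomposition C = B (+) x B. *)
Lemma dirsumII : dirsum mul B x.
Proof.
split.
  move=> c; exists (c - x ** d c), (d c).
  have dcB : d c \in B by rewrite -Im_B d_im.
  split; last split => //; last by rewrite subrK.
  apply: d0_ker; rewrite (dB Dd) (d_xB dcB) subrr //.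
move=> a b aB bB e.
have e2 := congr1 d e; rewrite (dD Dd) (ker_d0 aB) add0r (d_xB bB) d0 // in e2.
by move: e; rewrite e2 cm0r addr0.
Qed.

Lemma dformII a b : a \in B -> b \in B -> d (a + x ** b) = b.
Proof. by move=> aB bB; rewrite (dD Dd) (ker_d0 aB) add0r d_xB. Qed.

(* B = B^perp: if y = a + x b is orthogonal to B, then x b is orthogonal
   to all of C = B + x B, so b = 0 by nondegeneracy. *)
Lemma perpII y : y \in B <-> (forall b, b \in B -> f y b = 0).
Proof.
split; first by move=> yB b bB; exact: polarB0.
move=> hy; case: dirsumII => ex un.
case: (ex y) => a [b [aB [bB ey]]].
have hxb : forall c, f (x ** b) c = 0.
  move=> c; case: (ex c) => a' [b' [a'B [b'B ->]]].
  rewrite polarDr polar_mulL (polarB0 bB b'B) mulr0 addr0.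
  have := hy a' a'B; rewrite ey polarDl (polarB0 aB a'B) add0r //.
have xb0 := cd_nondeg CD hxb.
have := un 0 b (mem0v _) bB; rewrite add0r => /(_ xb0) [_ b0].
by rewrite ey b0 cm0r addr0.
Qed.

Lemma caseII : situationII mul one t n B x /\
  (forall a b, a \in B -> b \in B -> d (a + x ** b) = b).
Proof.
split; last exact: dformII.
split; first by split; [exact: one_B | exact: mulB].
split; first exact: assocB.
split; first exact: commB.
split; first exact: divB.
split; first exact: dimB.
split; first exact: perpII.
split; first exact: tx0.
exact: dirsumII.
Qed.
End OneInImage.

Section OneNotInImage.
Hypothesis one_notin_Im : one \notin Im.

(* B meets Im only in 0: a nonzero a = d(z) in B would give
   1 = d(a^-1 z). *)
Lemma ker_im0 a : a \in B -> a \in Im -> a = 0.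
Proof.
move=> aB aI; apply/eqP/negPn/negP => a0.
have na := ker_anisotropic aB a0.
case/memIm: aI => z ez.
have kB : (n a)^-1 *: cj a \in B by rewrite memvZ // cj_mem // one_B.
apply: (negP one_notin_Im); apply/memIm; exists ((n a)^-1 *: cj a ** z).
by rewrite (dML _ kB) -ez cmZl cjmul scalerA mulVf // scale1r.
Qed.

Section NonzeroValue.
Variable y0 : C.
Hypothesis hy0 : d y0 != 0.
Local Notation v := (d y0).

Lemma v_im : v \in Im. Proof. exact: d_im. Qed.
Lemma nv : n v != 0. Proof. exact: im_anisotropic v_im hy0. Qed.
Lemma vB_im b : b \in B -> v ** b \in Im.
Proof. by move=> bB; rewrite -(dMR _ bB) d_im. Qed.

(* By skew-adjointness Im is orthogonal to B; in particular its elements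
   are traceless and v^2 = -n(v) 1. *)
Lemma polar_im_ker i k : i \in Im -> k \in B -> f i k = 0.
Proof.
case/memIm => z -> kB; rewrite (skew Dd) (ker_d0 kB) polar0r oppr0 //.
Qed.
Lemma trace_im i : i \in Im -> t i = 0.
Proof. by move=> iI; rewrite t_polar1 polar_im_ker // one_B. Qed.
Lemma cj_im i : i \in Im -> cj i = - i.
Proof. by move=> iI; rewrite cjE trace_im // scale0r sub0r. Qed.
Lemma vv : v ** v = (- n v) *: one.
Proof. by rewrite quad trace_im ?v_im // scale0r sub0r scaleNr. Qed.

Lemma mul_B_vB a b : a \in B -> b \in B -> a ** (v ** b) = v ** (cj a ** b).
Proof.
move=> aB bB; have h := cj_cancelL2 (cj a) v b.
rewrite cjK (cj_im v_im) (polarC) (polar_im_ker v_im (cjB aB)) scale0r cmNl in h.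
by apply: (veq_comb1 (c:=1) h); vring.
Qed.

Lemma cj_mul_v b : b \in B -> cj b ** v = v ** b.
Proof.
move=> bB; have h := quad_polar (cj b) v.
rewrite tcj (trace_im v_im) (polarC (cj b)) (polar_im_ker v_im (cjB bB)) in h.
rewrite !scale0r addr0 subr0 in h.
have e : v ** cj b = t b *: v - v ** b by rewrite cjE cmBr cmZr cm1r.
rewrite e in h.
by apply: (veq_comb1 (c:=1) h); vring.
Qed.

Lemma mul_vB_B a b : a \in B -> b \in B -> (v ** b) ** a = v ** (a ** b).
Proof.
move=> aB bB.
have e : cj ((v ** b) ** a) = - (v ** (a ** b)).
  by rewrite cjM (cj_im (vB_im bB)) cmNr (mul_B_vB (cjB aB) bB) cjK.
by rewrite -[LHS]cjK e cjN (cj_im (vB_im (mulB aB bB))) opprK.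
Qed.

Lemma mul_vB_vB b1 b2 : b1 \in B -> b2 \in B ->
  (v ** b1) ** (v ** b2) = (- n v) *: (b2 ** cj b1).
Proof.
move=> b1B b2B; have h := cj_cancelL2 (cj (v ** b1)) v b2.
rewrite cjK (cj_im v_im) (cj_im (vB_im b1B)) !cmNl (mul_vB_B b2B b1B) cmNr opprK in h.
rewrite -(cd_altl CD) vv cmZl polarNl polar_adj cjmul polarZr -t_polar1 in h.
have e : b2 ** cj b1 = t b1 *: b2 - b2 ** b1 by rewrite cjE cmBr cmZr cm1r.
rewrite e.
by rewrite cm1l in h; apply: (veq_comb1 (c:=1) h); vring.
Qed.

Lemma cayley_dickson_mul a1 b1 a2 b2 : a1 \in B -> b1 \in B -> a2 \in B -> b2 \in B ->
  (a1 + v ** b1) ** (a2 + v ** b2) =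
  (a1 ** a2 + (- n v) *: (b2 ** cj b1)) + v ** (cj a1 ** b2 + a2 ** b1).
Proof.
move=> a1B b1B a2B b2B.
rewrite (cmDl a1 (v ** b1)) (cmDr a2 (v ** b2) a1) (cmDr a2 (v ** b2) (v ** b1)).
rewrite (mul_B_vB a1B b2B) (mul_vB_B a2B b1B) (mul_vB_vB b1B b2B).
rewrite (cmDr (cj a1 ** b2) (a2 ** b1) v); vring.
Qed.

(* B is associative: rewriting the alternating identity for the associator
   (cj y, x, v z) with the rules above yields v E = 0, where E is a
   multiple of the associator (x, y, z); cancel v. *)
Lemma assocI : assoc_on mul B.
Proof.
move=> x y z xB yB zB.
have h := assoc_swap23 (cj y) x (v ** z).
have cyxB : cj y ** x \in B by rewrite mulB // cjB.
rewrite (mul_B_vB cyxB zB) (mul_B_vB xB zB) (mul_B_vB (cjB yB) (mulB (cjB xB) zB)) in h.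
rewrite (mul_B_vB (cjB yB) zB) (mul_vB_B xB (mulB (cjB (cjB yB)) zB)) in h.
rewrite (mul_vB_B xB zB) (mul_B_vB (cjB yB) (mulB xB zB)) cjM !cjK in h.
set E := (cj x ** y) ** z - y ** (cj x ** z) + x ** (y ** z) - y ** (x ** z).
have hE : v ** E = 0.
  rewrite /E !cmDr ?cmNr.
  by apply: (veq_comb1 (c:=1) h); vring.
have E0 := cancelL nv hE.
rewrite /E !cjE in E0; mnorm.
rewrite ?(cmDl, cmDr, cmBl, cmBr, cmNl, cmNr, cmZl, cmZr, cm0l, cm0r, cm1l, cm1r) in E0.
by apply: (veq_comb1 (c:= -1) E0); vring.
Qed.

(* v B is a 4-dimensional subspace of Im, hence C = B (+) v B. *)
Lemma dirsumI : dirsum mul B v.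
Proof.
pose VB := (Lm v @: B)%VS.
have VIm : (VB <= Im)%VS.
  by apply/subvP => w /memv_imgP [b bB ->]; rewrite LmE vB_im.
have BV0 : (B :&: VB = 0)%VS.
  apply/eqP; rewrite -subv0; apply/subvP => w /memv_capP [wB wV].
  by rewrite memv0 (ker_im0 wB (subvP VIm _ wV)).
have dimV : \dim VB = 4%N.
  rewrite limg_dim_eq ?dimB //.
  apply/eqP; rewrite -subv0; apply/subvP => w /memv_capP [wB].
  by rewrite memv_ker LmE !memv0 => /eqP e; rewrite (cancelL nv e).
have full : (B + VB)%VS = fullv.
  apply/eqP; rewrite eqEdim subvf /= (dimv_disjoint_sum BV0) dimB dimV (cd_dim CD) //.
split.
  move=> c; have : c \in (B + VB)%VS by rewrite full memvf.
  case/memv_addP => a aB [w /memv_imgP [b bB ->] ->].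
  by exists a, b; rewrite LmE.
move=> a b aB bB e.
have a0 : a = 0.
  apply: ker_im0 => //; have -> : a = - (v ** b) by apply/eqP; rewrite -addr_eq0 e.
  by rewrite memvN vB_im.
split=> //; move: e; rewrite a0 add0r; exact: cancelL nv.
Qed.

Lemma situationI_v : situationI mul one t B v (- n v).
Proof.
split; first by split; [exact: one_B | exact: mulB].
split; first exact: assocI.
split; first exact: divB.
split; first exact: dimB.
split; first by rewrite oppr_eq0 nv.
split; first exact: vv.
split; first exact: dirsumI.
exact: cayley_dickson_mul.
Qed.

(* d(v) lies in Im = v B, so d(v) = v u for some u in B. *)
Lemma d_v_form : exists2 u, u \in B & d v = v ** u.
Proof.
have [ex _] := dirsumI.
case: (ex (d v)) => a [u [aB [uB edv]]].
have a0 : a = 0.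
  apply: ker_im0 => //; have -> : a = d v - v ** u by rewrite edv addrK.
  by rewrite memvB ?d_im ?vB_im.
by exists u; rewrite // edv a0 add0r.
Qed.

(* Differentiating v^2 = -n(v) 1 gives v(vu) + (vu)v = 0, i.e.
   n(v) t(u) = 0, whence t(u) = 0. *)
Lemma trace_u0 u : u \in B -> d v = v ** u -> t u = 0.
Proof.
move=> uB edv.
have h := dM Dd v v; rewrite vv (dZ1 Dd) edv in h.
rewrite -{1}(cj_mul_v uB) (cd_altr CD) -(cd_altl CD) vv !cmZl !cmZr cm1l cm1r in h.
have h2 : (n v * t u) *: one = 0 *: one.
  by rewrite cjE in h; apply: (veq_comb1 (c:=1) h); vring.
by have := scaler1_inj h2 => /eqP; rewrite mulf_eq0 (negbTE nv) /= => /eqP.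
Qed.

Lemma dformI u a b : u \in B -> d v = v ** u -> a \in B -> b \in B ->
  d (a + v ** b) = v ** (b ** u).
Proof.
move=> uB edv aB bB.
by rewrite (dD Dd) (ker_d0 aB) add0r (dMR _ bB) edv mul_vB_B.
Qed.
End NonzeroValue.
End OneNotInImage.

Lemma kernel_structure : (exists v gamma u, [/\ situationI mul one t B v gamma, u \in B, t u = 0 &
          forall a b, a \in B -> b \in B -> d (a + mul v b) = mul v (mul b u)]) \/
      ((exists x, d x = one) /\
       forall x, d x = one ->
         situationII mul one t n B x /\
         forall a b, a \in B -> b \in B -> d (a + mul x b) = b).
Proof.
case: (boolP (one \in Im)) => h.
  right; case/memIm: h => z ez; split; first by exists z.
  by move=> x hx; exact: caseII hx.
left; case: d_nonzero => y0 hy0; case: (d_v_form h hy0) => u uB edv.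
exists (d y0), (- n (d y0)), u; split.
- exact: situationI_v.
- exact: uB.
- exact: trace_u0 edv.
- by move=> a b aB bB; apply: dformI.
Qed.
End KernelOfDerivation.

(* The B-component b of c = a + w b in a direct sum C = B (+) w B (chosen
   by description, as the decomposition is unique). *)
Definition bpart (B : {vspace C}) (w c : C) : C :=
  epsilon (inhabits (0 : C)) (fun b => exists a, [/\ a \in B, b \in B & c = a + w ** b]).

Lemma dirsum_unique (B : {vspace C}) w a b a' b' : dirsum mul B w ->
  a \in B -> b \in B -> a' \in B -> b' \in B -> a + w ** b = a' + w ** b' -> a = a' /\ b = b'.
Proof.
move=> [_ un] aB bB a'B b'B e.
have : (a - a') + w ** (b - b') = 0.
  by rewrite cmBr; apply: (veq_comb1 (c:=1) e); vring.
case/un; rewrite ?memvB // => /eqP h1 /eqP h2.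
by split; apply/eqP; rewrite -subr_eq0.
Qed.

Lemma bpartE (B : {vspace C}) w a b : dirsum mul B w -> a \in B -> b \in B ->
  bpart B w (a + w ** b) = b.
Proof.
move=> ds aB bB; rewrite /bpart.
set P := (fun b0 => _).
have hP : exists b0, P b0 by exists b, a.
case: (epsilon_spec (inhabits (0 : C)) P hP) => a' [a'B b'B e].
by have [_ ->] := dirsum_unique ds aB bB a'B b'B e.
Qed.

Lemma bpart_lin (B : {vspace C}) w : dirsum mul B w ->
  forall a c1 c2, bpart B w (a *: c1 + c2) = a *: bpart B w c1 + bpart B w c2.
Proof.
move=> ds a c1 c2; have [ex _] := ds.
case: (ex c1) => a1 [b1 [a1B [b1B ->]]]; case: (ex c2) => a2 [b2 [a2B [b2B ->]]].
have -> : a *: (a1 + w ** b1) + (a2 + w ** b2) = (a *: a1 + a2) + w ** (a *: b1 + b2).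
  by rewrite cmDr cmZr; vring.
by rewrite !bpartE ?memvD ?memvZ.
Qed.

(* In situation (II), 0 = f(1,1) = 2 n(1) = 2. *)
Lemma sitII_char2 B x : situationII mul one t n B x -> (2%:R : F) = 0.
Proof.
case=> [[oB _] [_ [_ [_ [_ [perp _]]]]]].
have h := (perp one).1 oB one oB.
have e : one + one = 2%:R *: one by rewrite scaler_nat mulr2n.
rewrite /polar e (cd_nZ CD) n1 in h.
by apply: (seq_comb1 (c:=1) h); ring.
Qed.

Section ConverseI.
Variables (B : {vspace C}) (v : C) (gamma : F).
Hypothesis SI : situationI mul one t B v gamma.
Variable u : C.
Hypotheses (uB : u \in B) (u0 : u <> 0) (tu : t u = 0).

Definition derI c := v ** (bpart B v c ** u).

Lemma SI_parts : [/\ one \in B, (forall x y, x \in B -> y \in B -> x ** y \in B),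
  assoc_on mul B, division_on mul one B & dirsum mul B v].
Proof. by case: SI => [[? ?] [? [? [_ [_ [_ [? _]]]]]]]. Qed.

Lemma SI_mul a1 b1 a2 b2 : a1 \in B -> b1 \in B -> a2 \in B -> b2 \in B ->
  (a1 + v ** b1) ** (a2 + v ** b2) =
    (a1 ** a2 + gamma *: (b2 ** cj b1)) + v ** (cj a1 ** b2 + a2 ** b1).
Proof. by case: SI => _ [_ [_ [_ [_ [_ [_ mulE]]]]]]; exact: mulE. Qed.

Lemma derI_E a b : a \in B -> b \in B -> derI (a + v ** b) = v ** (b ** u).
Proof. by move=> aB bB; rewrite /derI bpartE //; case: SI_parts. Qed.

(* n(v)^2 = n(v^2) = gamma^2 <> 0. *)
Lemma sitI_nv : n v != 0.
Proof.
case: SI => _ [_ [_ [_ [g0 [vv _]]]]].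
apply/negP => /eqP h; have := cd_nM CD v v; rewrite vv h mulr0 (cd_nZ CD) n1 mulr1.
by move/eqP; rewrite expf_eq0 (negbTE g0) andbF.
Qed.

(* Leibniz rule: both sides expand, by the multiplication table, to the
   same element; the key facts are cj(u) = -u and associativity of B. *)
Lemma derI_leibniz c1 c2 : derI (c1 ** c2) = derI c1 ** c2 + c1 ** derI c2.
Proof.
have [oB mB asB _ [ex _]] := SI_parts.
have cjb : forall b, b \in B -> cj b \in B by move=> b; apply: cj_mem.
have cju : cj u = - u by rewrite cjE tu scale0r sub0r.
case: (ex c1) => a1 [b1 [a1B [b1B ->]]]; case: (ex c2) => a2 [b2 [a2B [b2B ->]]].
have PB : a1 ** a2 + gamma *: (b2 ** cj b1) \in B by rewrite memvD ?memvZ ?mB ?cjb.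
have QB : cj a1 ** b2 + a2 ** b1 \in B by rewrite memvD ?mB ?cjb.
rewrite (SI_mul a1B b1B a2B b2B) // !derI_E //.
have -> : v ** (b1 ** u) = 0 + v ** (b1 ** u) by rewrite add0r.
have -> : v ** (b2 ** u) = 0 + v ** (b2 ** u) by rewrite add0r.
rewrite (SI_mul (mem0v _) (mB _ _ b1B uB) a2B b2B).
rewrite (SI_mul a1B b1B (mem0v _) (mB _ _ b2B uB)).
rewrite cj0 !cm0l !cm0r !add0r !addr0.
have eq1 : b2 ** cj (b1 ** u) = - ((b2 ** u) ** cj b1).
  by rewrite cjM cju cmNl cmNr (asB b2 u (cj b1)) ?cjb.
have eq2 : (cj a1 ** b2 + a2 ** b1) ** u = cj a1 ** (b2 ** u) + a2 ** (b1 ** u).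
  by rewrite cmDl (asB _ _ _ (cjb _ a1B) b2B uB) (asB _ _ _ a2B b1B uB).
rewrite eq1 eq2 (cmDr (cj a1 ** (b2 ** u)) (a2 ** (b1 ** u)) v).
rewrite ?cm0r ?addr0 ?add0r.
vring.
Qed.

(* Values v (b u) are products of invertible elements or zero. *)
Lemma derI_der : der_inv_values mul one derI.
Proof.
have [oB _ _ dvB ds] := SI_parts.
split.
- split; last exact: derI_leibniz.
  by move=> a c1 c2; rewrite /derI (bpart_lin ds) cmDl cmZl cmDr cmZr.
- exists (0 + v ** one); rewrite derI_E ?mem0v // cm1l => h.
  exact: u0 (cancelL sitI_nv h).
- move=> c; have [ex _] := ds; case: (ex c) => a [b [aB [bB ->]]]; rewrite derI_E //.
  have [->|b0] := eqVneq b 0; first by left; rewrite cm0l cm0r.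
  right; apply: n_unit; rewrite !(cd_nM CD) !mulf_neq0 ?sitI_nv //.
    exact: div_n_neq0 dvB bB b0.
  exact: div_n_neq0 dvB uB (introN eqP u0).
Qed.
End ConverseI.

Lemma convI B v gamma : situationI mul one t B v gamma ->
      forall u, u \in B -> u <> 0 -> t u = 0 ->
      exists d, der_inv_values mul one d /\
        forall a b, a \in B -> b \in B -> d (a + mul v b) = mul v (mul b u).
Proof.
move=> SI u uB u0 tu; exists (derI B v u); split; first exact: (derI_der SI uB u0 tu).
by move=> a b aB bB; apply: (derI_E SI).
Qed.

Section ConverseII.
Variables (B : {vspace C}) (x : C).
Hypothesis SII : situationII mul one t n B x.

Lemma SII_parts : [/\ one \in B, (forall a b, a \in B -> b \in B -> a ** b \in B),
  comm_on mul B, division_on mul one B &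
  [/\ (forall y, y \in B <-> (forall b, b \in B -> f y b = 0)), t x = 0 & dirsum mul B x]].
Proof. by case: SII => [[? ?] [_ [? [? [_ [? [? ?]]]]]]]. Qed.

Definition derII c := bpart B x c.

Lemma derII_E a b : a \in B -> b \in B -> derII (a + x ** b) = b.
Proof. by move=> aB bB; rewrite /derII bpartE //; case: SII_parts => _ _ _ _ [].
Qed.

Lemma sitII_polarB a b : a \in B -> b \in B -> f a b = 0.
Proof. by case: SII_parts => _ _ _ _ [perp _ _] aB; move/(perp a).1: aB; apply. Qed.

Lemma sitII_traceB a : a \in B -> t a = 0.
Proof. by case: SII_parts => oB _ _ _ _ aB; rewrite t_polar1 sitII_polarB. Qed.

Lemma sitII_B_xB a b : a \in B -> b \in B -> a ** (x ** b) = - (x ** (a ** b)) - f a x *: b.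
Proof.
move=> aB bB; have h := cj_cancelL2 (cj a) (cj x) b.
case: SII_parts => _ _ _ _ [_ tx _].
rewrite !cjK !cjE tx (sitII_traceB aB) !scale0r !sub0r !cmNl !polarNl !polarNr opprK in h.
by rewrite !cmNr in h; apply: (veq_comb1 (c:= -1) h); vring.
Qed.

Lemma sitII_xB_B a b : a \in B -> b \in B ->
  (x ** b) ** a = x ** (a ** b) + f a x *: b - f b x *: a + f (a ** b) x *: one.
Proof.
move=> aB bB; have h := quad_polar (x ** b) a.
case: SII_parts => oB _ _ _ [_ tx _].
have h2 := polar_mul_swap x a b one.
rewrite !cm1r -t_polar1 (sitII_traceB bB) mulr0 in h2.
rewrite tM tx (sitII_traceB aB) GRing.mul0r sub0r scale0r addr0 (sitII_B_xB aB bB) in h.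
have e : f (x ** b) a = - f (a ** b) x by apply/eqP; rewrite -addr_eq0 h2.
rewrite e (polarC x b) in h.
by apply: (veq_comb1 (c:= 1) h); vring.
Qed.

Lemma sitII_xB_xB b1 b2 : b1 \in B -> b2 \in B ->
  (x ** b1) ** (x ** b2) = n x *: (b2 ** b1) - x ** (f b2 x *: b1 + f (b2 ** b1) x *: one).
Proof.
move=> b1B b2B; have h := cj_cancelL2 (cj (x ** b1)) x b2.
case: SII_parts => oB mB _ _ [_ tx _].
have ecx : cj x = - x by rewrite cjE tx scale0r sub0r.
have ecxb : cj (x ** b1) = - (f b1 x *: one) - x ** b1.
  by rewrite cjE tM tx GRing.mul0r sub0r scaleNr (polarC x).
have fz : f (cj (x ** b1)) x = 0.
  rewrite ecxb polarBl polarNl polarZl (polarC one) -t_polar1 tx mulr0 oppr0 sub0r polar_adj.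
  by rewrite cjmul polarZr -t_polar1 (sitII_traceB b1B) mulr0 oppr0.
rewrite cjK fz scale0r ecx ecxb in h.
rewrite ?(cmDl, cmBl, cmNl, cmZl, cm1l) (sitII_xB_B b2B b1B) in h.
rewrite ?(cmDr, cmBr, cmNr, cmZr, cm1r) -!(cd_altl CD) quad tx scale0r sub0r in h.
rewrite ?(cmDl, cmBl, cmNl, cmZl, cm1l) in h.
rewrite ?(cmDr, cmBr, cmNr, cmZr, cm1r).
by apply: (veq_comb1 (c:= 1) h); vring.
Qed.

(* Leibniz rule: the x B-component of (a1 + x b1)(a2 + x b2) agrees with
   b1 (a2 + x b2) + (a1 + x b1) b2 up to a multiple of 2 = 0, using
   commutativity of B. *)
Lemma derII_leibniz c1 c2 : derII (c1 ** c2) = derII c1 ** c2 + c1 ** derII c2.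
Proof.
have [oB mB cm _ [_ _ [ex _]]] := SII_parts.
have two0 := sitII_char2 SII.
case: (ex c1) => a1 [b1 [a1B [b1B ->]]]; case: (ex c2) => a2 [b2 [a2B [b2B ->]]].
set P := a1 ** a2 - f a1 x *: b2 + f a2 x *: b1 - f b1 x *: a2 + f (a2 ** b1) x *: one
         + n x *: (b2 ** b1).
set Q := - (a1 ** b2) + a2 ** b1 - f b2 x *: b1 - f (b2 ** b1) x *: one.
have PB : P \in B.
  by rewrite /P; repeat (rewrite ?memvN; first [apply: memvD | apply: memvZ | apply: mB | assumption]).
have QB : Q \in B.
  by rewrite /Q; repeat (rewrite ?memvN; first [apply: memvD | apply: memvZ | apply: mB | assumption]).
have hp : (a1 + x ** b1) ** (a2 + x ** b2) = P + x ** Q.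
  rewrite (cmDl a1 (x ** b1)) !(cmDr a2 (x ** b2)) (sitII_B_xB a1B b2B).
  rewrite (sitII_xB_B a2B b1B) (sitII_xB_xB b1B b2B) /P /Q ?(cmDr, cmBr, cmNr, cmZr).
  vring.
rewrite hp !derII_E //.
rewrite cmDr cmDl (sitII_B_xB b1B b2B) (sitII_xB_B b2B b1B) (cm b1 b2) // (cm b1 a2) // /Q.
have h2 : 2%:R *: (a1 ** b2 + f b2 x *: b1 + f (b2 ** b1) x *: one - f b1 x *: b2) = 0.
  by rewrite two0 scale0r.
apply: (veq_comb1 (c:= -1) h2).
vring.
Qed.

Lemma derII_der : der_inv_values mul one derII.
Proof.
have [oB _ _ dvB [_ _ ds]] := SII_parts.
split.
- split; last exact: derII_leibniz.
  exact: bpart_lin ds.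
- exists (0 + x ** one); rewrite derII_E ?mem0v //; exact/eqP/one_neq0.
- move=> c; have [ex _] := ds; case: (ex c) => a [b [aB [bB ->]]]; rewrite derII_E //.
  have [->|b0] := eqVneq b 0; first by left.
  by right; apply: n_unit; exact: div_n_neq0 dvB bB b0.
Qed.
End ConverseII.

Lemma convII B x : situationII mul one t n B x ->
      exists d, der_inv_values mul one d /\
        forall a b, a \in B -> b \in B -> d (a + mul x b) = b.
Proof.
move=> SII; exists (derII B x); split; first exact: (derII_der SII).
by move=> a b aB bB; apply: (derII_E SII).
Qed.
End CayleyDickson.

(* A subspace of dimension 4 containing 1 contains a nonzero traceless
   element: 1 itself if t(1) = 0, otherwise b - (t(b)/t(1)) 1 for some b
   outside the line spanned by 1. *)
Lemma exists_trace0 (F : fieldType) (C : vectType F) (mul : C -> C -> C) (one : C)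
    (t n : C -> F) (B : {vspace C}) :
  is_CD_alg mul one t n -> one \in B -> \dim B = 4%N ->
  exists u, [/\ u \in B, u <> 0 & t u = 0].
Proof.
move=> CD oB dB.
have [t10|t1n0] := eqVneq (t one) 0.
  by exists one; split => //; apply/eqP; exact: (one_neq0 CD).
have [sub|/subvPn [b bB bn]] := boolP (B <= <[one]>)%VS.
  by have := dimvS sub; rewrite dim_vline dB (one_neq0 CD).
exists (b - (t b / t one) *: one); split.
- by rewrite memvB // memvZ.
- by move=> /eqP; rewrite subr_eq0 => /eqP e; move: bn; rewrite e memvZ // memv_line.
- by rewrite (tB CD) (tZ CD) divfK // subrr.
Qed.

Lemma derivation_kernel (F : fieldType) (C : vectType F) (mul : C -> C -> C) (d : C -> C) :
  is_derivation mul d -> exists B : {vspace C}, forall y, y \in B <-> d y = 0.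
Proof.
move=> Dd; exists (lker (@Lf F C d)) => y.
by rewrite memv_ker (LfE Dd.1); split => /eqP.
Qed.

Theorem lemma2p2 (F : fieldType) (C : vectType F) (mul : C -> C -> C) (one : C)
    (t : C -> F) (n : C -> F) :
  is_CD_alg mul one t n -> cd_split mul ->
  [/\
   (exists d, der_inv_values mul one d) <->
     ((exists B v gamma, situationI mul one t B v gamma) \/
      (exists B x, situationII mul one t n B x)),
   (forall d, der_inv_values mul one d ->
      forall B : {vspace C}, (forall y, y \in B <-> d y = 0) ->
      (exists v gamma u, [/\ situationI mul one t B v gamma, u \in B, t u = 0 &
          forall a b, a \in B -> b \in B -> d (a + mul v b) = mul v (mul b u)]) \/
      ((exists x, d x = one) /\
       forall x, d x = one ->
         situationII mul one t n B x /\
         forall a b, a \in B -> b \in B -> d (a + mul x b) = b)),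
   (forall B v gamma, situationI mul one t B v gamma ->
      forall u, u \in B -> u <> 0 -> t u = 0 ->
      exists d, der_inv_values mul one d /\
        forall a b, a \in B -> b \in B -> d (a + mul v b) = mul v (mul b u)),
   (forall B x, situationII mul one t n B x ->
      exists d, der_inv_values mul one d /\
        forall a b, a \in B -> b \in B -> d (a + mul x b) = b) &
   (forall B x, situationII mul one t n B x -> 2%:R = 0 :> F)].
Proof.
move=> CD SPL; split.
- split.
    case=> d Dv; have [B HB] : exists B : {vspace C}, forall y, y \in B <-> d y = 0.
      by case: Dv => Dd _ _; exact: (derivation_kernel Dd).
    case: (kernel_structure CD Dv SPL HB) => [[v [g [u [SI _ _ _]]]] | [[x hx] H]].
      by left; exists B, v, g.
    by right; exists B, x; exact: (H x hx).1.
  case=> [[B [v [g SI]]] | [B [x SII]]].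
    have [[oB _] [_ [_ [dB _]]]] := SI.
    have [u [uB u0 tu]] := exists_trace0 CD oB dB.
    by have [d [Dv _]] := convI CD SI uB u0 tu; exists d.
  by have [d [Dv _]] := convII CD SII; exists d.
- by move=> d Dv B HB; exact: (kernel_structure CD Dv SPL HB).
- exact: convI CD.
- exact: convII CD.
- exact: sitII_char2 CD.
Qed.
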